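(* If a graph $G$ has at most $a$ vertices of degree greater than $D$, then $G$ has clique-based $\infty$-admissibility at most $a+D$.
   Context: All graphs are finite and simple. Given an ordering $v_1,\ldots,v_n$ of $V(G)$, the $\infty$-backconnectivity of $v_k$ is the maximum number of paths (of any length) from $v_k$ to $\{v_1,\ldots,v_{k-1}\}$ that pairwise intersect only in $v_k$; the $\infty$-admissibility of the ordering is the maximum $\infty$-backconnectivity over its vertices. For $X\subseteq V(G)$, $G$ has $X$-based $\infty$-admissibility at most $t$ if there is an ordering $v_1,\ldots,v_n$ of $V(G)$ with $\infty$-admissibility at most $t$ and $X=\{v_1,\ldots,v_{|X|}\}$. $G$ has clique-based $\infty$-admissibility at most $t$ if it has $X$-based $\infty$-admissibility at most $t$ for every $X\subseteq V(G)$ inducing a clique in $G$. *)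

(* A finite simple graph is a symmetric irreflexive
   relation e on a finType T (vertex set = T). *)
From mathcomp Require Import all_boot.
Set Implicit Arguments.
Unset Strict Implicit.
Unset Printing Implicit Defensive.

Section Adm.
Variables (T : finType) (e : rel T).

Definition deg (v : T) : nat := #|[set u | e v u]|.

(* v :: p is a path (distinct vertices, consecutive ones adjacent) of
   length >= 1 from v to the set S (its last vertex lies in S). *)
Definition path_to (v : T) (S : {set T}) (p : seq T) : bool :=
  [&& p != [::], path e v p, uniq (v :: p) & last v p \in S].

(* A family of paths v :: p_i from v to S that pairwise intersect only in v
   (each p_i is the path with its first vertex v removed). *)
Definition fan (v : T) (S : {set T}) (F : seq (seq T)) : bool :=
  all (path_to v S) F && pairwise (fun p q => ~~ has (mem q) p) F.

Definition backconn_le (v : T) (S : {set T}) (t : nat) : Prop :=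
  forall F, fan v S F -> size F <= t.

Definition ordering (s : seq T) : bool := uniq s && (size s == #|T|).

Definition adm_le (s : seq T) (t : nat) : Prop :=
  forall pre v post, s = pre ++ v :: post -> backconn_le v [set x in pre] t.

Definition based_adm_le (X : {set T}) (t : nat) : Prop :=
  exists s, [/\ ordering s, adm_le s t & X = [set x in take #|X| s]].

Definition is_clique (X : {set T}) : Prop :=
  forall x y, x \in X -> y \in X -> x != y -> e x y.

Definition clique_based_adm_le (t : nat) : Prop :=
  forall X : {set T}, is_clique X -> based_adm_le X t.

End Adm.

From mathcomp Require Import all_boot.
Set Implicit Arguments.
Unset Strict Implicit.
Unset Printing Implicit Defensive.

(* Order the vertices as: the clique X, then the remaining high-degree vertices
   H, then everything else.  A low-degree vertex has at most D disjoint paths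
   leaving it, since each starts with a distinct neighbour.  A vertex of X ∪ H
   has at most |X ∪ H| - 1 earlier vertices, and the paths of a fan end in
   distinct earlier vertices.  If X ⊆ H this is below a; otherwise X contains a
   vertex of degree at most D, so the clique has at most D + 1 vertices and
   |X ∪ H| - 1 <= a + D. *)

Lemma uniq_map_pairwise_disjoint (T : eqType) (f : seq T -> T)
    (F : seq (seq T)) :
  (forall p, p \in F -> f p \in p) ->
  pairwise (fun p q => ~~ has (mem q) p) F -> uniq (map f F).
Proof.
elim: F => [|p F IH] //= fP /andP[p_disj F_disj].
rewrite IH ?andbT //; last by move=> q qF; apply: fP; rewrite inE qF orbT.
apply/mapP => -[q qF fpq].
have fpp : f p \in p by apply: fP; rewrite inE eqxx.
have /hasPn/(_ _ fpp) := allP p_disj q qF.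
by rewrite /= fpq fP // inE qF orbT.
Qed.

Lemma size_le_card_set (T : finType) (s : seq T) (A : {set T}) :
  uniq s -> {subset s <= A} -> size s <= #|A|.
Proof.
move=> s_uniq sA; rewrite -(card_uniqP s_uniq).
by apply/subset_leq_card/subsetP.
Qed.

Lemma subset_prefix_cat (T : eqType) (pre post P Q : seq T) (v : T) :
  pre ++ v :: post = P ++ Q -> v \notin Q -> {subset pre <= P}.
Proof.
move=> E vQ; have [Ple|preP] := leqP (size P) (size pre).
  have : v \in drop (size P) (pre ++ v :: post).
    rewrite drop_cat; case: ifP => _; first by rewrite mem_cat inE eqxx orbT.
    by move: Ple; rewrite -subn_eq0 => /eqP->; rewrite drop0 inE eqxx.
  by rewrite E drop_size_cat // (negPf vQ).
have := congr1 (take (size pre)) E.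
by rewrite take_size_cat // take_cat preP => -> x; apply: mem_take.
Qed.

Section Admissibility.
Variables (T : finType) (e : rel T).

Lemma fan_size_le_card v S F : fan e v S F -> size F <= #|S|.
Proof.
case/andP=> F_paths F_disj; rewrite -(size_map (last v)).
apply: size_le_card_set => [|_ /mapP[p /(allP F_paths) /and4P[_ _ _ pS] ->]] //.
apply: uniq_map_pairwise_disjoint F_disj => p /(allP F_paths) /and4P[p0 _ _ _].
by case: p p0 => [|x p] //= _; rewrite mem_last.
Qed.

Lemma fan_size_le_deg v S F : fan e v S F -> size F <= deg e v.
Proof.
case/andP=> F_paths F_disj; rewrite -(size_map (head v)).
apply: size_le_card_set => [|_ /mapP[p /(allP F_paths) /and4P[p0 vp _ _] ->]].
  apply: uniq_map_pairwise_disjoint F_disj => p /(allP F_paths) /and4P[p0 _ _ _].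
  by case: p p0 => [|x p] //= _; rewrite inE eqxx.
by case: p p0 vp => [|x p] //= _ /andP[evx _]; rewrite inE.
Qed.

Lemma card_clique_le_deg (X : {set T}) x :
  is_clique e X -> x \in X -> #|X| <= (deg e x).+1.
Proof.
move=> X_clique xX; rewrite (cardsD1 x) xX ltnS.
apply/subset_leq_card/subsetP => y; rewrite !inE => /andP[yx yX].
by apply: X_clique; rewrite // eq_sym.
Qed.

Lemma adm_le_cat (P C : seq T) (A : {set T}) t :
    uniq (P ++ C) -> {subset P <= A} -> #|A| <= t.+1 ->
    (forall c, c \in C -> deg e c <= t) ->
  adm_le e (P ++ C) t.
Proof.
move=> PC_uniq PA A_small C_low pre v post E F /[dup] vF /fan_size_le_card.
case: (boolP (v \in C)) => [vC _|vC /leq_trans->] //.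
  exact: leq_trans (fan_size_le_deg vF) (C_low v vC).
have vP : v \in P.
  by move: (mem_cat v P C); rewrite E mem_cat inE eqxx orbT (negPf vC) orbF.
have v_pre : v \notin pre.
  move: PC_uniq; rewrite E cat_uniq => /and3P[_ v_post _].
  exact: (hasPn v_post v (mem_head v post)).
have pre_A : [set x in pre] \subset A :\ v.
  apply/subsetP => x; rewrite !inE => x_pre.
  rewrite (PA x (subset_prefix_cat (esym E) vC x_pre)) andbT.
  by apply: contraNneq v_pre => <-.
rewrite -ltnS; apply: leq_trans A_small.
exact: leq_ltn_trans (subset_leq_card pre_A) (proper_card (properD1 (PA v vP))).
Qed.

Definition layered_enum (X A : {set T}) : seq T :=
  enum X ++ enum (A :\: X) ++ enum (~: A).

Lemma ordering_layered_enum (X A : {set T}) :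
  X \subset A -> ordering (layered_enum X A).
Proof.
move=> XA; have s_mem x : x \in layered_enum X A.
  rewrite !mem_cat !mem_enum !inE.
  by case: (boolP (x \in X)) => [|_]; [|case: (x \in A)].
have s_uniq : uniq (layered_enum X A).
  rewrite !cat_uniq !enum_uniq /= !andbT.
  apply/andP; split; apply/hasPn => x; rewrite ?mem_cat !mem_enum !inE.
    by case/orP=> [/andP[]//|]; apply: contra => /(subsetP XA).
  by move/negPf->; rewrite andbF.
rewrite /ordering s_uniq -(card_uniqP s_uniq) /=.
by apply/eqP/eq_card.
Qed.

Lemma take_layered_enum (X A : {set T}) :
  X = [set x in take #|X| (layered_enum X A)].
Proof.
rewrite /layered_enum take_size_cat -?cardE //.
by apply/setP => x; rewrite inE mem_enum.
Qed.

End Admissibility.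

Theorem lemma24 (T : finType) (e : rel T) (e_sym : symmetric e)
  (e_irr : irreflexive e) (a D : nat) :
  #|[set v | D < deg e v]| <= a ->
  clique_based_adm_le e (a + D).
Proof.
set H := [set v | D < deg e v] => H_small X X_clique.
have XH_small : #|X :|: H| <= (a + D).+1.
  have [XH|/subsetPn[x xX xH]] := boolP (X \subset H).
    rewrite (setUidPr XH); apply/(leq_trans H_small)/ltnW.
    by rewrite ltnS leq_addr.
  rewrite (leq_trans (leq_card_setU X H)) // addnC -addnS leq_add //.
  apply: leq_trans (card_clique_le_deg X_clique xX) _.
  by move: xH; rewrite /H inE -leqNgt.
exists (layered_enum X (X :|: H)); split.
- exact/ordering_layered_enum/subsetUl.
- rewrite /layered_enum catA; apply: (adm_le_cat _ _ XH_small).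
  + by rewrite -catA; case/andP: (ordering_layered_enum (subsetUl X H)).
  + by move=> x; rewrite mem_cat !mem_enum !inE => /orP[->|/andP[_ ->]].
  + move=> c; rewrite mem_enum !inE negb_or => /andP[_].
    by rewrite -leqNgt => /leq_trans->; rewrite ?leq_addl.
- exact: take_layered_enum.
Qed.
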